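(* Given any instance and any real number $t\ge1$, let $N^*\subseteq N$ be a $t$-cohesive group and $A$ an allocation satisfying EJR-M. Then the average satisfaction of $N^*$ with respect to $A$ is at least $\lfloor t\rfloor\cdot\left(1-\frac{\lfloor t\rfloor+1}{2t}\right)$.
   Context: Model: There is a set of agents $N=\{1,\dots,n\}$. The resource $R$ consists of a cake $C=[0,c]$ for a real $c\ge 0$ and a set of indivisible goods $G=\{g_1,\dots,g_m\}$ for an integer $m\ge 0$, with $\max(c,m)>0$. A piece of cake is a union of finitely many disjoint closed subintervals of $C$; its length $\ell(\cdot)$ is the sum of the lengths of its intervals. A bundle $R'=(C',G')$ consists of a piece of cake $C'\subseteq C$ and a set $G'\subseteq G$; its size is $s(R')=\ell(C')+|G'|$. Each agent $i$ approves a bundle $R_i=(C_i,G_i)$, and her utility for a bundle $R'$ is $u_i(R')=\ell(C_i\cap C')+|G_i\cap G'|$. A parameter $\alpha\in(0,c+m]$ is given; an allocation is a bundle $A$ with $s(A)\le\alpha$. For a real $t>0$, $N^*\subseteq N$ is $t$-cohesive if $|N^*|\ge t n/\alpha$ and $s(\bigcap_{i\in N^*}R_i)\ge t$. EJR-M: an allocation $A$ satisfies EJR-M if for every real $t>0$ and every $t$-cohesive group $N^*$ for which there exists a bundle $R^*\subseteq R$ with $s(R^* )=t$ and $R^*\subseteq R_i$ for all $i\in N^*$, there is $j\in N^*$ with $u_j(A)\ge t$. The average satisfaction of a group $N'\subseteq N$ with respect to $A$ is $\frac1{|N'|}\sum_{i\in N'}u_i(A)$. *)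

From HB Require Import structures.
From mathcomp Require Import all_boot all_order all_algebra.
From mathcomp Require Import all_classical all_reals all_analysis.
Set Implicit Arguments. Unset Strict Implicit. Unset Printing Implicit Defensive.
Import Order.TTheory GRing.Theory Num.Theory.
Local Open Scope classical_set_scope.
Local Open Scope ring_scope.

Section CakeGoods.
Variable R : realType.

(* A piece of cake of C = [0,c]: a union of finitely many pairwise disjoint
   closed subintervals [a,b] (0 <= a <= b <= c) of C, given by a list of
   endpoint pairs. *)
Definition is_piece (c : R) (S : set R) : Prop :=
  exists s : seq (R * R),
    [/\ all (fun p => (0 <= p.1) && (p.1 <= p.2) && (p.2 <= c)) s,
        (forall i j, (i < j < size s)%N ->
           ((nth (0,0) s i).2 < (nth (0,0) s j).1) \/
           ((nth (0,0) s j).2 < (nth (0,0) s i).1))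
      & S = [set x | has (fun p => (p.1 <= x) && (x <= p.2)) s]].

Definition ell (S : set R) : R := fine (@lebesgue_measure R S).

Definition bundle (m : nat) := (set R * {set 'I_m})%type.

Definition is_bundle (c : R) (m : nat) (B : bundle m) : Prop := is_piece c B.1.

Definition bsize (m : nat) (B : bundle m) : R := ell B.1 + #|B.2|%:R.

(* u_i(B) where Ri is the bundle approved by agent i *)
Definition util (m : nat) (Ri B : bundle m) : R :=
  ell (Ri.1 `&` B.1) + #|Ri.2 :&: B.2|%:R.

Definition subbundle (m : nat) (B B' : bundle m) : Prop :=
  B.1 `<=` B'.1 /\ B.2 \subset B'.2.

(* intersection of the approved bundles of the agents in Ns
   (intersected with the whole resource R, so that the empty intersection is R) *)
Definition inter (c : R) (n m : nat) (Rs : 'I_n -> bundle m) (Ns : {set 'I_n})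
  : bundle m :=
  ([set x | (0 <= x <= c) /\ forall i, i \in Ns -> (Rs i).1 x],
   finset (fun g : 'I_m => [forall i in Ns, g \in (Rs i).2])).

Definition cohesive (c : R) (n m : nat) (alpha : R) (Rs : 'I_n -> bundle m)
  (t : R) (Ns : {set 'I_n}) : Prop :=
  t * n%:R / alpha <= #|Ns|%:R /\ t <= bsize (inter c Rs Ns).

Definition EJRM (c : R) (n m : nat) (alpha : R) (Rs : 'I_n -> bundle m)
  (A : bundle m) : Prop :=
  forall (t : R) (Ns : {set 'I_n}), 0 < t -> cohesive c alpha Rs t Ns ->
    (exists Rstar : bundle m, [/\ is_bundle c Rstar, bsize Rstar = t &
        forall i, i \in Ns -> subbundle Rstar (Rs i)]) ->
    exists2 j, j \in Ns & t <= util (Rs j) A.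

Definition avg_sat (n m : nat) (Rs : 'I_n -> bundle m) (A : bundle m)
  (Ns : {set 'I_n}) : R :=
  (\sum_(i in Ns) util (Rs i) A) / #|Ns|%:R.

End CakeGoods.

From HB Require Import structures.
From mathcomp Require Import all_boot all_order all_algebra.
From mathcomp Require Import all_classical all_reals all_analysis.
From mathcomp Require Import ring lra.
Import Order.TTheory GRing.Theory Num.Theory.
Local Open Scope ring_scope.
Set Implicit Arguments. Unset Strict Implicit.

(* Let k = floor t, u_i = u_i(A) and, for 1 <= l <= k, let S_l be the set of
   agents of the t-cohesive group N* whose utility is below l.  If S_l had at
   least l n / alpha members it would be l-cohesive (its common bundle contains
   that of N*, of size >= t >= l), and a sub-bundle R* of size exactly l can be
   cut from it; EJR-M would then give an agent of S_l with utility >= l, which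
   is absurd.  Hence |S_l| < l n / alpha <= l |N*| / t.  Counting utility in
   unit layers, sum_i u_i >= sum_{l=1..k} (|N*| - |S_l|)
   >= k |N*| - (|N*| / t) k (k+1) / 2, which is the claimed bound. *)

Section IntervalLists.
Variable R : realType.
Local Open Scope classical_set_scope.
Local Open Scope ring_scope.
Implicit Types (p q x : R * R) (s : seq (R * R)).

Definition itv_union s : set R :=
  [set y | has (fun p => (p.1 <= y) && (y <= p.2)) s].

Definition itv_apart p q : bool := (p.2 < q.1) || (q.2 < p.1).

Definition in_cake (c : R) p : bool := (0 <= p.1) && (p.1 <= p.2) && (p.2 <= c).

Definition itv_ne x : bool := x.1 <= x.2.
Definition subitv x p : bool := (p.1 <= x.1) && (x.2 <= p.2).
Definition itv_len p : R := p.2 - p.1.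
Definition total_len s : R := \sum_(p <- s) itv_len p.

Lemma in_cake_ne (c : R) s : all (in_cake c) s -> all itv_ne s.
Proof. by move=> hs; apply/allP => p /(allP hs) /andP[/andP[_ h] _]. Qed.

Lemma total_len_ge0 s : all itv_ne s -> 0 <= total_len s.
Proof.
move=> hs; rewrite /total_len big_seq; apply: sumr_ge0 => p hp.
by rewrite /itv_len subr_ge0; apply: (allP hs).
Qed.

Lemma apart_subitv x y p q :
  subitv x p -> subitv y q -> itv_apart p q -> itv_apart x y.
Proof.
case/andP=> h1 h2 /andP[h3 h4]; rewrite /itv_apart => /orP[h|h]; apply/orP.
  by left; apply: (le_lt_trans h2); apply: (lt_le_trans h).
by right; apply: (le_lt_trans h4); apply: (lt_le_trans h).
Qed.

Lemma piece_iff (c : R) (S : set R) : is_piece c S <->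
  exists s, [/\ all (in_cake c) s, pairwise itv_apart s & S = itv_union s].
Proof.
split.
  case=> s [hv hp ->]; exists s; split => //.
  apply/(pairwiseP (0,0)) => i j; rewrite !inE => hi hj hij.
  by apply/orP; apply: hp; rewrite hij.
case=> s [hv /(pairwiseP (0,0)) hp ->]; exists s; split => //.
move=> i j /andP[hij hj]; have hi := ltn_trans hij hj.
by have /orP := hp i j hi hj hij.
Qed.

Definition itv_meet p q : R * R := (Num.max p.1 q.1, Num.min p.2 q.2).

Fixpoint meet_lists s s' : seq (R * R) :=
  if s is p :: s1 then seq.filter itv_ne (map (itv_meet p) s') ++ meet_lists s1 s'
  else [::].

Lemma subitv_meet p q : subitv (itv_meet p q) p && subitv (itv_meet p q) q.
Proof. by rewrite /subitv /itv_meet /= !le_max !ge_min !lexx /= !orbT. Qed.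

Lemma mem_meet_lists s s' x : x \in meet_lists s s' ->
  [/\ itv_ne x, (exists2 p, p \in s & subitv x p)
              & (exists2 q, q \in s' & subitv x q)].
Proof.
elim: s => [|p s IH] //=; rewrite mem_cat => /orP[|/IH [h1 [p0 hp0 h2] h3]].
  rewrite mem_filter => /andP[hne /mapP[q hq hx]]; subst x; split => //.
    by exists p; rewrite ?mem_head //; case/andP: (subitv_meet p q).
  by exists q => //; case/andP: (subitv_meet p q).
by split => //; exists p0 => //; rewrite inE hp0 orbT.
Qed.

Lemma meet_lists_apart s s' : pairwise itv_apart s -> pairwise itv_apart s' ->
  pairwise itv_apart (meet_lists s s').
Proof.
move=> hs hs'; elim: s hs => [|p s IH] //= /andP[hp hs].
rewrite pairwise_cat IH // andbT; apply/andP; split.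
  apply/allrelP => x y; rewrite mem_filter => /andP[_ /mapP[q _ ->]] hy.
  case/mem_meet_lists: hy => _ [p' hp' hy] _.
  have [h1 _] := andP (subitv_meet p q).
  by apply: (apart_subitv h1 hy); move/allP: hp; apply.
apply: pairwise_filter; rewrite pairwise_map.
elim: s' hs' {IH} => [|q s' IH] //= /andP[hq hs']; rewrite IH // andbT.
apply/allP => q' hq'.
have [_ h1] := andP (subitv_meet p q); have [_ h2] := andP (subitv_meet p q').
by apply: (apart_subitv h1 h2); move/allP: hq; apply.
Qed.

Lemma meet_lists_in_cake c s s' :
  all (in_cake c) s -> all (in_cake c) (meet_lists s s').
Proof.
move=> hs; apply/allP => x /mem_meet_lists [hne [p hp /andP[h1 h2]] _].
have /andP[/andP[v1 v2] v3] := allP hs p hp.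
by rewrite /in_cake -/(itv_ne x) hne (le_trans v1 h1) (le_trans h2 v3).
Qed.

Lemma meet_listsE s s' :
  itv_union (meet_lists s s') = itv_union s `&` itv_union s'.
Proof.
rewrite predeqE => y; split.
  case/hasP=> x /mem_meet_lists [_ [p hp /andP[h1 h2]] [q hq /andP[h3 h4]]].
  case/andP=> h5 h6; split; apply/hasP.
    by exists p => //; rewrite (le_trans h1 h5) (le_trans h6 h2).
  by exists q => //; rewrite (le_trans h3 h5) (le_trans h6 h4).
case=> /hasP [p hp /andP[h1 h2]] /hasP [q hq /andP[h3 h4]].
apply/hasP; exists (itv_meet p q); last first.
  by rewrite /itv_meet /= ge_max le_min h1 h3 h2 h4.
elim: s hp => [|p' s IH] //=; rewrite inE mem_cat.
case/orP=> [/eqP<-|/IH ->]; last by rewrite orbT.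
rewrite mem_filter map_f // andbT /itv_ne /itv_meet /= ge_max !le_min.
by rewrite (le_trans h1 h2) (le_trans h1 h4) (le_trans h3 h2) (le_trans h3 h4).
Qed.

Fixpoint itv_prefix (r : R) s : seq (R * R) :=
  if s is p :: s1 then
    if r <= itv_len p then [:: (p.1, p.1 + r)]
    else p :: itv_prefix (r - itv_len p) s1
  else [::].

Lemma mem_itv_prefix r s x : 0 <= r -> all itv_ne s -> x \in itv_prefix r s ->
  itv_ne x /\ exists2 p, p \in s & subitv x p.
Proof.
elim: s r => [|p s IH] r //= r0 /andP[hp hs].
case: ifPn => hr.
  rewrite inE => /eqP ->; split; first by rewrite /itv_ne /= lerDl.
  by exists p; rewrite ?mem_head // /subitv /= lexx -lerBrDl.
rewrite inE => /orP[/eqP ->|].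
  by split => //; exists p; rewrite ?mem_head // /subitv !lexx.
case/IH => //; first by rewrite subr_ge0 ltW // ltNge.
by move=> h1 [p' hp' h2]; split => //; exists p' => //; rewrite inE hp' orbT.
Qed.

Lemma itv_prefix_apart r s : 0 <= r -> all itv_ne s -> pairwise itv_apart s ->
  pairwise itv_apart (itv_prefix r s).
Proof.
elim: s r => [|p s IH] r //= r0 /andP[hp hs] /andP[hps hss].
case: ifPn => hr //=.
have hr' : 0 <= r - itv_len p by rewrite subr_ge0 ltW // ltNge.
rewrite IH // andbT; apply/allP => x hx.
have [_ [p' hp' hsub]] := mem_itv_prefix hr' hs hx.
have hpp : subitv p p by rewrite /subitv !lexx.
by apply: (apart_subitv hpp hsub); move/allP: hps; apply.
Qed.

Lemma itv_prefix_in_cake c r s : 0 <= r -> all (in_cake c) s ->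
  all (in_cake c) (itv_prefix r s).
Proof.
move=> r0 hs; apply/allP => x.
case/(mem_itv_prefix r0 (in_cake_ne hs)) => hx [p hp /andP[h1 h2]].
have /andP[/andP[v1 v2] v3] := allP hs p hp.
by rewrite /in_cake -/(itv_ne x) hx (le_trans v1 h1) (le_trans h2 v3).
Qed.

Lemma itv_prefix_sub r s : 0 <= r -> all itv_ne s ->
  itv_union (itv_prefix r s) `<=` itv_union s.
Proof.
move=> r0 hne y /hasP [x /(mem_itv_prefix r0 hne) [_ [p hp /andP[h1 h2]]]].
case/andP=> h3 h4.
by apply/hasP; exists p => //; rewrite (le_trans h1 h3) (le_trans h4 h2).
Qed.

Lemma itv_prefix_len r s : 0 <= r -> r <= total_len s ->
  total_len (itv_prefix r s) = r.
Proof.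
rewrite /total_len; elim: s r => [|p s IH] r /= r0.
  by rewrite big_nil => hr; apply/eqP; rewrite eq_le hr r0.
rewrite big_cons => hr; case: ifPn => h.
  by rewrite big_cons big_nil addr0 /itv_len /= addrC addKr.
rewrite big_cons IH ?lerBlDl //; first by rewrite addrC subrK.
by rewrite subr_ge0 ltW // ltNge.
Qed.

Lemma itv_measure (a b : R) : a <= b ->
  lebesgue_measure ([set` `[a, b]] : set R) = (b - a)%:E.
Proof.
move=> ab; rewrite lebesgue_measure_itv /= lte_fin lt_neqAle ab andbT.
by have [->|ab'] := eqVneq a b; rewrite ?subrr // EFinN EFinB.
Qed.

Lemma itv_union_cons p s :
  itv_union (p :: s) = [set` `[p.1, p.2]] `|` itv_union s.
Proof.
rewrite predeqE => y; rewrite /itv_union /= in_itv /=.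
by split => [/orP[h|h]|[h|h]]; [left|right|apply/orP;left|apply/orP;right].
Qed.

Lemma itv_union_measurable s : measurable (itv_union s).
Proof.
elim: s => [|p s IH]; first by rewrite [itv_union _](_ : _ = set0) ?predeqE.
by rewrite itv_union_cons; apply: measurableU => //; apply: measurable_itv.
Qed.

Lemma itv_union_measure s : all itv_ne s -> pairwise itv_apart s ->
  lebesgue_measure (itv_union s) = (total_len s)%:E.
Proof.
rewrite /total_len; elim: s => [|p s IH] /=.
  by rewrite [itv_union _](_ : _ = set0) ?predeqE // measure0 big_nil.
case/andP=> hp hs /andP[hps hss].
rewrite itv_union_cons measureU //.
- by rewrite big_cons EFinD; congr (_ + _); [exact: itv_measure | exact: IH].
- exact: itv_union_measurable.
rewrite predeqE => y; split => // [[]]; rewrite /= in_itv /= => /andP[h1 h2].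
case/hasP => q hq /andP[h3 h4].
have := allP hps q hq; rewrite /itv_apart => /orP[h|h].
  by have := lt_le_trans (le_lt_trans h2 h) h3; rewrite ltxx.
by have := lt_le_trans (le_lt_trans h4 h) h1; rewrite ltxx.
Qed.

Lemma ell_itv_union s : all itv_ne s -> pairwise itv_apart s ->
  ell (itv_union s) = total_len s.
Proof. by move=> h1 h2; rewrite /ell itv_union_measure. Qed.

End IntervalLists.

Section CommonBundles.
Variables (R : realType) (c : R) (n m : nat) (Rs : 'I_n -> bundle R m).
Hypotheses (c_ge0 : 0 <= c) (Rs_bundle : forall i, is_bundle c (Rs i)).
Local Open Scope classical_set_scope.
Local Open Scope ring_scope.

Lemma common_piece (Ns : {set 'I_n}) : exists s,
  [/\ all (in_cake c) s, pairwise (@itv_apart R) s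
    & (inter c Rs Ns).1 = itv_union s].
Proof.
suff [s [hv hp hs]] : exists s, [/\ all (in_cake c) s, pairwise (@itv_apart R) s &
    [set x | (0 <= x <= c) /\ forall i, i \in enum Ns -> (Rs i).1 x]
    = itv_union s].
  exists s; split => //; rewrite -hs /inter /= predeqE => x.
  by split=> -[hx hi]; split => // i hiN; apply: hi; rewrite ?mem_enum in hiN *.
elim: (enum Ns) => [|i l [s [hv hp hs]]].
  exists [:: (0, c)]; split => //=; first by rewrite /in_cake /= !lexx c_ge0.
  by rewrite predeqE => x; rewrite /itv_union /= orbF; split => [[]|].
have /piece_iff [si [hvi hpi hsi]] := Rs_bundle i.
exists (meet_lists s si); split.
- exact: meet_lists_in_cake.
- exact: meet_lists_apart.
rewrite meet_listsE -hs -hsi predeqE => x; split.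
  case=> hx hl; split; last by apply: hl; rewrite mem_head.
  by split => // j hj; apply: hl; rewrite inE hj orbT.
by case=> -[hx hl] hi; split => // j; rewrite inE => /orP[/eqP->|/hl].
Qed.

Lemma common_bundle_anti (N1 N2 : {set 'I_n}) : N1 \subset N2 ->
  bsize (inter c Rs N2) <= bsize (inter c Rs N1).
Proof.
move=> /fintype.subsetP sub12.
have [s1 [v1 p1 e1]] := common_piece N1.
have [s2 [v2 p2 e2]] := common_piece N2.
rewrite /bsize; apply: lerD.
  have ne1 := in_cake_ne v1; have ne2 := in_cake_ne v2.
  rewrite e1 e2 !ell_itv_union // -lee_fin.
  rewrite -(itv_union_measure ne1 p1) -(itv_union_measure ne2 p2).
  apply: le_measure; rewrite ?inE; try exact: itv_union_measurable.
  by rewrite -e1 -e2 => x [hx hi]; split => // i /sub12; apply: hi.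
rewrite ler_nat; apply: subset_leq_card; apply/fintype.subsetP => g.
by rewrite !inE => /forall_inP h; apply/forall_inP => i /sub12; apply: h.
Qed.

(* A common bundle of size at least l contains a bundle of size exactly l:
   take up to l of its goods and fill up with a prefix of its cake. *)
Lemma common_sub_bundle (Ns : {set 'I_n}) (l : nat) :
  l%:R <= bsize (inter c Rs Ns) ->
  exists Rstar : bundle R m, [/\ is_bundle c Rstar, bsize Rstar = l%:R &
    forall i, i \in Ns -> subbundle Rstar (Rs i)].
Proof.
move=> hl; have [s [hv hp hs]] := common_piece Ns.
have hne := in_cake_ne hv.
rewrite /bsize hs ell_itv_union // in hl.
set G := (inter c Rs Ns).2 in hl *.
pose j := minn l #|G|.
pose G' := [set x in take j (enum G)].
have card_G' : #|G'| = j.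
  rewrite cardsE (card_uniqP (take_uniq _ (enum_uniq _))).
  by rewrite size_takel // -cardE geq_minr.
have sub_G' : G' \subset G.
  by apply/fintype.subsetP => x; rewrite inE => /mem_take; rewrite mem_enum.
pose r : R := l%:R - j%:R.
have r_ge0 : 0 <= r by rewrite subr_ge0 ler_nat geq_minl.
have r_le : r <= total_len s.
  rewrite /r /j; case: (leqP l #|G|) => h.
    by rewrite subrr total_len_ge0.
  by rewrite lerBlDr.
have hv' := itv_prefix_in_cake r_ge0 hv.
exists (itv_union (itv_prefix r s), G'); split.
- by apply/piece_iff; exists (itv_prefix r s); rewrite itv_prefix_apart.
- rewrite /bsize /= ell_itv_union ?(in_cake_ne hv') ?itv_prefix_apart //.
  by rewrite itv_prefix_len // card_G' /r subrK.
move=> i hi; split => /=.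
  by move=> x /(itv_prefix_sub r_ge0 hne); rewrite -hs => -[_]; apply.
apply: (fintype.subset_trans sub_G'); apply/fintype.subsetP => g.
by rewrite inE => /forall_inP; apply.
Qed.

End CommonBundles.

Section LayerCounting.
Variable R : realFieldType.

Lemma layers_below (u : R) (k : nat) : 0 <= u ->
  \sum_(l < k) (1 - (nat_of_bool (u < l.+1%:R))%:R) <= u.
Proof.
move=> u_ge0; elim: k => [|k IH]; first by rewrite big_ord0.
rewrite big_ord_recr /=; case: ltP => [_|h]; first by rewrite subrr addr0.
rewrite subr0; apply: le_trans h; rewrite -natr1 lerD2r.
have -> : k%:R = \sum_(l < k) (1 : R) by rewrite sumr_const card_ord.
by apply: ler_sum => l _; rewrite lerBlDr lerDl.
Qed.

(* Summing the layers over a group: every agent with utility >= l contributes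
   to layer l, so the total utility is at least the sum over the layers of the
   number of agents reaching them. *)
Lemma sum_layers (n : nat) (u : 'I_n -> R) (Ns : {set 'I_n}) (k : nat) :
  (forall i, i \in Ns -> 0 <= u i) ->
  \sum_(l < k) (#|Ns|%:R - #|[set i in Ns | u i < l.+1%:R]|%:R)
    <= \sum_(i in Ns) u i.
Proof.
move=> u_ge0.
apply: (@le_trans _ _ (\sum_(i in Ns) \sum_(l < k)
    (1 - (nat_of_bool (u i < l.+1%:R))%:R))); last first.
  by apply: ler_sum => i /u_ge0 /layers_below.
rewrite exchange_big /=; apply: ler_sum => l _.
rewrite sumrB sumr_const lerB // -sumr_const [X in X <= _]big_mkcond.
rewrite [X in _ <= X]big_mkcond /=; apply: ler_sum => i _.
by rewrite inE; case: (i \in Ns); case: (u i < _).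
Qed.

Lemma sum_succ_nat (k : nat) : (\sum_(l < k) l.+1%:R : R) * 2 = k%:R * (k%:R + 1).
Proof.
elim: k => [|k IH]; first by rewrite big_ord0 !mul0r.
by rewrite big_ord_recr /= mulrDl IH -natr1; ring.
Qed.

Lemma layered_average_bound (N t beta S : R) (k : nat) :
  0 < N -> 0 < t -> beta * t <= N ->
  \sum_(l < k) (N - l.+1%:R * beta) <= S ->
  k%:R * (1 - (k%:R + 1) / (2 * t)) <= S / N.
Proof.
move=> N_gt0 t_gt0 beta_t hS; rewrite ler_pdivlMr //; apply: le_trans hS.
rewrite sumrB sumr_const card_ord -mulr_suml.
have gauss := sum_succ_nat k.
have -> : k%:R * (1 - (k%:R + 1) / (2 * t)) * N
    = N *+ k - (k%:R * (k%:R + 1)) * (N / t) / 2.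
  by rewrite -mulr_natr; field; rewrite gt_eqF.
have beta_le : beta <= N / t by rewrite ler_pdivlMr.
have kk_ge0 : 0 <= k%:R * (k%:R + 1) :> R by rewrite mulr_ge0 ?addr_ge0.
rewrite -mulr_natl; nra.
Qed.

End LayerCounting.

Lemma util_ge0 (R : realType) (m : nat) (Ri B : bundle R m) : 0 <= util Ri B.
Proof. by rewrite /util addr_ge0 // /ell fine_ge0 // measure_ge0. Qed.

Section EJRMConsequence.
Variables (R : realType) (c alpha : R) (n m : nat).
Variables (Rs : 'I_n -> bundle R m) (A : bundle R m).
Hypotheses (c_ge0 : 0 <= c) (Rs_bundle : forall i, is_bundle c (Rs i)).
Hypothesis ejrm : EJRM c alpha Rs A.

(* In a t-cohesive group, fewer than l n / alpha agents have utility below l,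
   for every integer 1 <= l <= t: otherwise they would form an l-cohesive
   group in which nobody reaches utility l, contradicting EJR-M. *)
Lemma ejrm_few_below (t : R) (Ns : {set 'I_n}) (l : nat) :
  (0 < l)%N -> l%:R <= t -> cohesive c alpha Rs t Ns ->
  #|[set i in Ns | util (Rs i) A < l%:R]|%:R < l%:R * n%:R / alpha.
Proof.
move=> l_gt0 l_le_t [_ t_le]; rewrite ltNge; apply/negP => many.
set S := [set i in Ns | _] in many.
have sub_S : S \subset Ns by apply/fintype.subsetP => i; rewrite inE => /andP[].
have l_le : l%:R <= bsize (inter c Rs S).
  by rewrite (le_trans l_le_t) // (le_trans t_le) // common_bundle_anti.
have [j] : exists2 j, j \in S & l%:R <= util (Rs j) A.
  by apply: ejrm; [rewrite ltr0n | split | exact: common_sub_bundle].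
by rewrite !inE => /andP[_]; rewrite ltNge => /negP.
Qed.

End EJRMConsequence.

Theorem mainTheorem13 (R : realType) (c : R) (n m : nat) (alpha : R)
  (Rs : 'I_n -> bundle R m) (A : bundle R m) (t : R) (Ns : {set 'I_n}) :
  0 <= c -> (0 < c) \/ (0 < m)%N -> (0 < n)%N ->
  0 < alpha -> alpha <= c + m%:R ->
  (forall i, is_bundle c (Rs i)) ->
  is_bundle c A -> bsize A <= alpha ->
  EJRM c alpha Rs A ->
  1 <= t -> cohesive c alpha Rs t Ns ->
  (Num.floor t)%:~R * (1 - ((Num.floor t)%:~R + 1) / (2 * t))
    <= avg_sat Rs A Ns.
Proof.
move=> c_ge0 _ n_gt0 alpha_gt0 _ Rs_bundle _ _ ejrm t_ge1 coh.
have t_gt0 : 0 < t by apply: lt_le_trans t_ge1.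
have floor_ge0 : 0 <= Num.floor t by rewrite floor_ge0 ltW.
set k := `|Num.floor t|%N.
have kE : (Num.floor t)%:~R = k%:R :> R.
  by rewrite /k -[in LHS](gez0_abs floor_ge0).
have k_le_t : k%:R <= t by rewrite -kE floor_le.
rewrite kE.
have beta_t : n%:R / alpha * t <= #|Ns|%:R by rewrite mulrC mulrA coh.1.
have N_gt0 : 0 < #|Ns|%:R :> R.
  by apply: lt_le_trans beta_t; rewrite !mulr_gt0 ?invr_gt0 ?ltr0n.
apply: (layered_average_bound N_gt0 t_gt0 beta_t).
apply: le_trans (sum_layers k (fun i _ => util_ge0 (Rs i) A)).
apply: ler_sum => l _; rewrite lerB // mulrA ltW //.
apply: (ejrm_few_below c_ge0 Rs_bundle ejrm _ _ coh) => //.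
by rewrite (le_trans _ k_le_t) // ler_nat.
Qed.
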